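(* Assume the random gather-step setting below. For every Byzantine strategy $z=z(X)$ (the vectors $z^{(j)}$ being arbitrary functions of the delivering configuration $X$), $$\mathbb{E}_X\big[\Delta(\theta_1,\dots,\theta_h)\big]\le m\,\Delta(\lambda_1,\dots,\lambda_h)\quad\text{with } m=1-\frac{\rho}{4}<1 .$$
   Context: Median of reals: for $y_1,\dots,y_q\in\mathbb{R}$ with order statistics $y_{(1)}\le\dots\le y_{(q)}$, $\mathrm{median}=y_{((q+1)/2)}$ if $q$ is odd and $\frac12(y_{(q/2)}+y_{(q/2+1)})$ if $q$ is even; $\mathrm{Median}$ of vectors is applied coordinate-wise. Coordinate-wise diameters: $\Delta_i(v_1,\dots,v_h)=\max_{j,k}|v_j[i]-v_k[i]|$, $\Delta=\sum_{i=1}^d\Delta_i$. Random gather-step setting: integers $f\ge1$, $n$, $h=n-f$, and $q$ with $2f+2\le q\le\lfloor h/2\rfloor$; fixed vectors $\lambda_1,\dots,\lambda_h\in\mathbb{R}^d$ held by the correct servers $1,\dots,h$. Let $S_j=\{s\subset\{1,\dots,h\}\setminus\{j\}:|s|\in\{q-f-1,\dots,q-1\}\}$ and $S=\prod_{j=1}^hS_j$. A delivering configuration $X=(X_1,\dots,X_h)$ is a random element of $S$ with $P(X=s)\ge\rho$ for all $s\in S$, for some $\rho>0$. Given $X$, each correct server $j$ receives arbitrary vectors $z^{(j)}_1,\dots,z^{(j)}_{q-1-|X_j|}\in\mathbb{R}^d$ (possibly depending on $X$) and computes $\theta_j=\mathrm{Median}\big(\lambda_j,(\lambda_k)_{k\in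 X_j},z^{(j)}_1,\dots,z^{(j)}_{q-1-|X_j|}\big)$. *)

From HB Require Import structures.
From mathcomp Require Import all_boot all_order all_algebra.
Set Implicit Arguments. Unset Strict Implicit. Unset Printing Implicit Defensive.
Import Order.TTheory GRing.Theory Num.Theory.
Local Open Scope ring_scope.

(* Median of a finite list of reals (order statistics y_(1) <= ... <= y_(q),
   indices here 0-based). *)
Definition median (R : realFieldType) (ys : seq R) : R :=
  let s := sort <=%R ys in
  let q := size ys in
  if odd q then nth 0 s (q.-1./2)
  else (nth 0 s (q./2).-1 + nth 0 s q./2) / 2%:R.

Definition Median (R : realFieldType) (d : nat) (vs : seq 'rV[R]_d) : 'rV[R]_d :=
  \row_(i < d) median [seq (v : 'rV[R]_d) ord0 i | v <- vs].

Definition Delta_i (R : realFieldType) (d h : nat) (v : 'I_h -> 'rV[R]_d)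
  (i : 'I_d) : R :=
  \big[Num.max/0]_(j < h) \big[Num.max/0]_(k < h) `|v j ord0 i - v k ord0 i|.

Definition Delta (R : realFieldType) (d h : nat) (v : 'I_h -> 'rV[R]_d) : R :=
  \sum_(i < d) Delta_i v i.

(* Delivering configurations: X = (X_1,...,X_h), X_j a subset of servers. *)
Definition config (h : nat) := {ffun 'I_h -> {set 'I_h}}.

Definition inSj (f q h : nat) (j : 'I_h) (s : {set 'I_h}) : bool :=
  (j \notin s) && (q - f - 1 <= #|s| <= q - 1)%N.

Definition inS (f q h : nat) (X : config h) : bool :=
  [forall j, inSj f q j (X j)].

(* theta_j = Median(lambda_j, (lambda_k)_{k in X_j}, z^(j)_1..z^(j)_{q-1-|X_j|}),
   where the Byzantine vectors are z X j t for t = 0 .. q-2-|X_j|. *)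
Definition theta (R : realFieldType) (d h q : nat) (lambda : 'I_h -> 'rV[R]_d)
  (z : config h -> 'I_h -> nat -> 'rV[R]_d) (X : config h) (j : 'I_h) : 'rV[R]_d :=
  Median (lambda j :: [seq lambda k | k <- enum (X j)]
                    ++ [seq z X j t | t <- iota 0 (q - 1 - #|X j|)]).

From HB Require Import structures.
From mathcomp Require Import all_boot all_order all_algebra.
From mathcomp Require Import zify lra.
Import Order.TTheory GRing.Theory Num.Theory.
Set Implicit Arguments. Unset Strict Implicit. Unset Printing Implicit Defensive.
Local Open Scope ring_scope.

(* The diameter Delta is a sum over coordinates, and the
   expectation is linear, so it suffices to contract each coordinate i.  Fix
   i, let D = Delta_i(lambda) and let [a, a + D] be the window containing all
   honest i-th coordinates.
   - Median robustness: the median of a list lies in [lo, hi] as soon as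
     strictly fewer than half of its entries lie above hi, and strictly fewer
     than half lie below lo.
   - Every admissible configuration X: server j's list has q entries, at most
     q - 1 - |X_j| <= f of them Byzantine, and 2f < q; so each theta_j lies
     in [a, a + D] and Delta_i(theta) <= D.
   - One good configuration: split the window at its midpoint.  Since
     h >= 2q one half contains at least q honest servers; letting every X_j
     consist of q - 1 servers of that half (possible, and admissible) forces
     every theta_j into that half, so Delta_i(theta) <= D / 2.
   - Averaging: with probability weights summing to 1, every term at most D
     and a term of weight >= rho at most D / 2, the expectation is at most
     (1 - rho / 2) D <= (1 - rho / 4) D. *)

Section MedianRobustness.
Variable R : realFieldType.

Lemma sorted_nth_le (b : R) (s : seq R) i :
  sorted <=%R s -> (i < size s - count (fun y : R => (b < y)%R) s)%N -> nth 0 s i <= b.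
Proof.
elim: s i => [|x s IH] i //= Hs.
have Hs' : sorted <=%R s by move: Hs; case: (s) => //= y t /andP[].
have Hmin : all (fun y => x <= y) s by apply: order_path_min => //; apply: le_trans.
case: i => [|i] /=.
  case: (ltrP b x) => // Hbx.
  have -> : count (fun y : R => (b < y)%R) s = size s.
    apply/eqP; rewrite -all_count; apply/allP => y Hy.
    by apply: lt_le_trans Hbx _; move/allP: Hmin; apply.
  by rewrite /= add1n subnn.
move=> Hi; apply: IH => //.
by move: Hi; case: (b < x) => /=; lia.
Qed.

Lemma sorted_nth_ge (a : R) (s : seq R) i :
  sorted <=%R s -> (count (fun y : R => (y < a)%R) s <= i)%N -> (i < size s)%N ->
  a <= nth 0 s i.
Proof.
elim: s i => [|x s IH] i //= Hs.
have Hs' : sorted <=%R s by move: Hs; case: (s) => //= y t /andP[].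
have Hmin : all (fun y => x <= y) s by apply: order_path_min => //; apply: le_trans.
case: (ltrP x a) => Hxa /=.
  case: i => [|i] /=; first by rewrite add1n.
  by rewrite add1n ltnS => Hc Hi; apply: IH.
case: i => [|i] //= _ Hi.
apply: IH => //.
suff -> : count (fun y : R => (y < a)%R) s = 0%N by [].
apply/eqP; rewrite -leqn0 leqNgt -has_count; apply/hasPn => y Hy.
by rewrite -leNgt; apply: le_trans Hxa _; move/allP: Hmin; apply.
Qed.

Lemma median_bounded (ys : seq R) (lo hi : R) :
  (2 * count (fun y : R => (hi < y)%R) ys < size ys)%N ->
  (2 * count (fun y : R => (y < lo)%R) ys < size ys)%N ->
  lo <= median ys <= hi.
Proof.
move=> Hhi Hlo; rewrite /median.
set s := sort _ ys; set q := size ys in Hhi Hlo *.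
have Ss : sorted <=%R s by apply: sort_sorted; exact: le_total.
have Sz : size s = q by rewrite size_sort.
have Cnt (p : pred R) : count p s = count p ys by apply/permP; rewrite perm_sort.
have Hmid k : (q.-1./2 <= k <= q./2)%N -> lo <= nth 0 s k <= hi.
  rewrite -!divn2 => /andP[k1 k2]; apply/andP; split.
    by apply: sorted_nth_ge => //; rewrite ?Cnt ?Sz; lia.
  by apply: sorted_nth_le => //; rewrite Cnt Sz; lia.
case: ifP => Hodd; first by apply: Hmid; rewrite -!divn2; lia.
have Oq : (q %% 2 = 0)%N by rewrite modn2 Hodd.
have /andP[a1 a2] : lo <= nth 0 s (q./2).-1 <= hi by apply: Hmid; rewrite -!divn2; lia.
have /andP[b1 b2] : lo <= nth 0 s q./2 <= hi by apply: Hmid; rewrite -!divn2; lia.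
by apply/andP; split; lra.
Qed.

End MedianRobustness.

Section GatherStep.
Variables (R : realFieldType) (d h q : nat).
Variables (lambda : 'I_h -> 'rV[R]_d) (z : config h -> 'I_h -> nat -> 'rV[R]_d).

(* Server j's i-th output coordinate stays in [lo, hi] when the received
   honest values do, provided the entries that may fall outside (its own
   value, if outside, and the q - 1 - |X_j| Byzantine ones) are a strict
   minority of the q entries. *)
Lemma theta_coord_bounded (X : config h) (j : 'I_h) (i : 'I_d) (lo hi : R) :
  (#|X j| <= q - 1)%N -> (0 < q)%N ->
  (forall k, k \in X j -> lo <= lambda k ord0 i <= hi) ->
  (2 * ((~~ (lo <= lambda j ord0 i <= hi)%R) + (q - 1 - #|X j|)) < q)%N ->
  lo <= theta q lambda z X j ord0 i <= hi.
Proof.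
move=> HX Hq Hin Hminor; rewrite /theta /Median mxE.
set L := (X in median X).
have Hsize : size L = q.
  rewrite /L /= size_map size_cat !size_map size_iota -cardE.
  by rewrite addnC subnK // subn1 prednK.
have Houtliers (p : pred R) : (forall x, lo <= x <= hi -> ~~ p x) ->
    (count p L <= (~~ (lo <= lambda j ord0 i <= hi)%R) + (q - 1 - #|X j|))%N.
  move=> Hp; rewrite /L /= map_cat -!map_comp count_cat !count_map.
  have -> : count (preim ((fun v : 'rV[R]_d => v ord0 i) \o lambda) p)
              (enum (X j)) = 0%N.
    rewrite (@eq_in_count _ _ pred0) ?count_pred0 // => k.
    by rewrite mem_enum => Hk /=; apply/negbTE/Hp/Hin.
  apply: leq_add; last by rewrite add0n -[X in (_ <= X)%N](size_iota 0) count_size.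
  by case E: (lo <= _ <= hi) => /=; [rewrite (negbTE (Hp _ E)) | case: (p _)].
apply: median_bounded; rewrite Hsize.
- have Hp (x : R) : lo <= x <= hi -> ~~ (hi < x).
    by move=> /andP[_ ?]; rewrite -leNgt.
  by have := Houtliers (fun y : R => hi < y) Hp; lia.
- have Hp (x : R) : lo <= x <= hi -> ~~ (x < lo).
    by move=> /andP[? _]; rewrite -leNgt.
  by have := Houtliers (fun y : R => y < lo) Hp; lia.
Qed.

(* For an admissible X_j, at most f <= (q - 1) / 2 inputs are Byzantine, so
   the output stays in any window containing all honest values. *)
Lemma theta_coord_admissible (f : nat) (X : config h) (j : 'I_h) (i : 'I_d)
    (lo hi : R) :
  (2 * f < q)%N -> inSj f q j (X j) ->
  (forall k, lo <= lambda k ord0 i <= hi) ->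
  lo <= theta q lambda z X j ord0 i <= hi.
Proof.
move=> Hfq /andP[_ /andP[Hlow Hup]] Hall.
apply: theta_coord_bounded => //; first lia.
set c := #|X j| in Hlow Hup *; rewrite Hall /= add0n; lia.
Qed.

(* If X_j consists of q - 1 honest servers whose values lie in [lo, hi],
   there are no Byzantine inputs and j's own value is a single possible
   outlier, so the output lies in [lo, hi] once q > 2. *)
Lemma theta_coord_full (X : config h) (j : 'I_h) (i : 'I_d) (lo hi : R) :
  (2 < q)%N -> #|X j| = (q - 1)%N ->
  (forall k, k \in X j -> lo <= lambda k ord0 i <= hi) ->
  lo <= theta q lambda z X j ord0 i <= hi.
Proof.
move=> Hq HX Hin; apply: theta_coord_bounded => //; rewrite ?HX //; first lia.
by rewrite subnn addn0; case: (~~ _) => /=; lia.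
Qed.

End GatherStep.

Section Diameter.
Variables (R : realFieldType) (d h : nat) (v : 'I_h -> 'rV[R]_d) (i : 'I_d).

Lemma Delta_i_ge0 : 0 <= Delta_i v i.
Proof. exact: bigmax_ge_id. Qed.

Lemma Delta_i_diff (j k : 'I_h) : v j ord0 i - v k ord0 i <= Delta_i v i.
Proof.
apply: le_trans (ler_norm _) _.
by apply: (bigmax_sup j) => //; apply: (bigmax_sup k).
Qed.

(* The family lies in a window of width Delta_i, starting at its minimum;
   any index k0 witnesses that the family is nonempty. *)
Lemma coord_window (k0 : 'I_h) :
  exists a, forall k, a <= v k ord0 i <= a + Delta_i v i.
Proof.
have [jm _ Hjm] := @arg_minP _ _ 'I_h k0 xpredT (fun k => v k ord0 i) isT.
exists (v jm ord0 i) => k; have := Hjm k isT; have := Delta_i_diff k jm.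
by move=> *; apply/andP; split; lra.
Qed.

Lemma Delta_i_window (lo M : R) :
  0 <= M -> (forall j, lo <= v j ord0 i <= lo + M) -> Delta_i v i <= M.
Proof.
move=> HM Hwin; apply: bigmax_le => // j _; apply: bigmax_le => // k _.
have /andP[a1 a2] := Hwin j; have /andP[b1 b2] := Hwin k.
by rewrite ler_norml; apply/andP; split; lra.
Qed.

End Diameter.

Lemma full_config_within (f q h : nat) (G : {set 'I_h}) :
  (q <= #|G|)%N ->
  exists X : config h, inS f q X /\ forall j, X j \subset G /\ #|X j| = (q - 1)%N.
Proof.
move=> HG.
pose Y (j : 'I_h) := [set x in take (q - 1) (enum (G :\ j))].
have HYsub j : Y j \subset G :\ j.
  by apply/subsetP => x; rewrite inE => /mem_take; rewrite mem_enum.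
have HYcard j : #|Y j| = (q - 1)%N.
  have Hu : uniq (take (q - 1) (enum (G :\ j))) by rewrite take_uniq // enum_uniq.
  rewrite /Y cardsE (card_uniqP Hu) size_take -cardE.
  have := cardsD1 j G; have := leq_b1 (j \in G); move: HG.
  by set c := #|G :\ j|; set g := #|G|; case: ltnP; lia.
exists [ffun j => Y j]; split.
  apply/forallP => j; rewrite /inSj ffunE HYcard; apply/andP; split; last lia.
  by apply/negP => /(subsetP (HYsub j)); rewrite !inE eqxx.
move=> j; rewrite ffunE HYcard; split => //.
by apply: subset_trans (HYsub j) (subD1set _ _).
Qed.

Section CoordinateContraction.
Variables (R : realFieldType) (d f h q : nat).
Variables (lambda : 'I_h -> 'rV[R]_d) (z : config h -> 'I_h -> nat -> 'rV[R]_d).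
Variables (i : 'I_d) (a : R).
Hypothesis Hwin : forall k, a <= lambda k ord0 i <= a + Delta_i lambda i.

Lemma theta_diam_le (X : config h) :
  (2 * f < q)%N -> inS f q X -> Delta_i (theta q lambda z X) i <= Delta_i lambda i.
Proof.
move=> Hfq /forallP HX; apply: (Delta_i_window (lo := a)); first exact: Delta_i_ge0.
by move=> j; apply: theta_coord_admissible Hfq (HX j) Hwin.
Qed.

(* Some admissible configuration halves the i-th diameter: all servers then
   gather from the half of the window holding at least q honest values.  A
   server's own value may lie in the other half, hence the need for q > 2. *)
Lemma good_config_exists :
  (2 < q)%N -> (2 * q <= h)%N ->
  exists X : config h,
    inS f q X /\ Delta_i (theta q lambda z X) i <= Delta_i lambda i / 2%:R.
Proof.
move=> Hq Hhq; set D := Delta_i lambda i; have D0 : 0 <= D := Delta_i_ge0 lambda i.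
have Hhalf (lo : R) (G : {set 'I_h}) : (q <= #|G|)%N ->
    (forall k, k \in G -> lo <= lambda k ord0 i <= lo + D / 2%:R) ->
    exists X : config h,
      inS f q X /\ Delta_i (theta q lambda z X) i <= D / 2%:R.
  move=> HG Hin; have [X [HX Hsub]] := full_config_within f HG.
  exists X; split => //; apply: (Delta_i_window (lo := lo)); first lra.
  move=> j; have [Hs Hc] := Hsub j; apply: theta_coord_full => //.
  by move=> k /(subsetP Hs) /Hin.
pose m := a + D / 2%:R; pose L := [set k | lambda k ord0 i <= m].
have [HL | HU] : (q <= #|L|)%N \/ (q <= #|~: L|)%N.
  by have := cardsC L; rewrite card_ord; lia.
- apply: (Hhalf a L HL) => k; rewrite inE /m => Hk.
  by have := Hwin k; rewrite -/D => /andP[? ?]; apply/andP; split; lra.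
- apply: (Hhalf m (~: L) HU) => k; rewrite !inE -ltNge /m => Hk.
  by have := Hwin k; rewrite -/D => /andP[? ?]; apply/andP; split; lra.
Qed.

End CoordinateContraction.

Lemma mean_contract (R : realFieldType) (I : finType) (A : pred I)
    (w g : I -> R) (x0 : I) (D rho : R) :
  (forall x, 0 <= w x) -> \sum_(x | A x) w x = 1 ->
  A x0 -> rho <= w x0 -> 0 <= D ->
  (forall x, A x -> g x <= D) -> g x0 <= D / 2%:R ->
  \sum_(x | A x) w x * g x <= (1 - rho / 2%:R) * D.
Proof.
move=> Hw0 Hw1 Ax0 Hrho D0 Hg Hgx0.
rewrite (bigD1 x0) //=; move: Hw1; rewrite (bigD1 x0) //= => Hw1.
have Hrest : \sum_(x | A x && (x != x0)) w x * g x <= (1 - w x0) * D.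
  apply: le_trans (_ : \sum_(x | A x && (x != x0)) w x * D <= _).
    by apply: ler_sum => x /andP[Ax _]; apply: ler_wpM2l; [exact: Hw0 | exact: Hg].
  by rewrite -mulr_suml; apply: ler_wpM2r => //; lra.
have Hx0 : w x0 * g x0 <= w x0 * (D / 2%:R) by apply: ler_wpM2l.
have : 0 <= (w x0 - rho) * D by apply: mulr_ge0 => //; lra.
by nra.
Qed.

Theorem mainTheorem6 (R : realFieldType) (d f n h q : nat)
  (Hf : (1 <= f)%N) (Hh : h = (n - f)%N)
  (Hq1 : (2 * f + 2 <= q)%N) (Hq2 : (q <= h./2)%N)
  (lambda : 'I_h -> 'rV[R]_d)
  (P : config h -> R) (rho : R)
  (Hrho : 0 < rho)
  (HP0 : forall X, 0 <= P X)
  (HPout : forall X, ~~ inS f q X -> P X = 0)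
  (HPsum : \sum_(X : config h) P X = 1)
  (HPrho : forall X, inS f q X -> rho <= P X)
  (z : config h -> 'I_h -> nat -> 'rV[R]_d) :
  \sum_(X : config h | inS f q X) P X * Delta (theta q lambda z X)
    <= (1 - rho / 4%:R) * Delta lambda
  /\ 1 - rho / 4%:R < 1.
Proof.
split; last by lra.
have Hhq : (2 * q <= h)%N by move: Hq2; rewrite -divn2; lia.
have k0 : 'I_h by exists 0%N; lia.
have HPS : \sum_(X : config h | inS f q X) P X = 1.
  by rewrite -HPsum (bigID (@inS f q h) predT) /= [X in _ + X]big1 ?addr0 // => X /HPout.
(* linearity of expectation reduces the claim to a single coordinate i *)
under eq_bigr => X _ do rewrite /Delta mulr_sumr.
rewrite exchange_big /Delta mulr_sumr; apply: ler_sum => i _ /=.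
have D0 := Delta_i_ge0 lambda i.
have [a Hwin] := coord_window lambda i k0.
have Hq3 : (2 < q)%N by lia.
have Hfq : (2 * f < q)%N by lia.
have [Xs [HXs HXsD]] := good_config_exists f z Hwin Hq3 Hhq.
apply: le_trans (mean_contract HP0 HPS HXs (HPrho _ HXs) D0 _ HXsD) _.
  by move=> X; apply: theta_diam_le Hfq.
by apply: ler_wpM2r => //; lra.
Qed.
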